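(* Let $s$ be a program with semantics $[\![s]\!]\subseteq\Sigma\times\Sigma$, $Q$ a predicate on $\Sigma$, and $\mathcal{L}$ a language of predicates on $\Sigma$, and let $\overline{\mathcal{L}}=\{\neg\varphi\mid\varphi\in\mathcal{L}\}$. Then the $\mathcal{L}$-weakest liberal precondition $\mathit{wlp}_{\mathcal{L}}(s,Q)$ is semantically equivalent to the negation of any best $\overline{\mathcal{L}}$-conjunction of the query $\Psi(\sigma):=\exists\sigma'.\,\neg Q(\sigma')\wedge[\![s]\!](\sigma,\sigma')$ (whose free variable is $\sigma$ and hidden variable is $\sigma'$).
   Context: $\Sigma$ is a set of program states; $[\![s]\!](\sigma,\sigma')$ holds iff $s$ started in $\sigma$ can terminate in $\sigma'$. The Hoare triple $\{P\}s\{Q\}$ holds iff $\forall\sigma,\sigma'.\,P(\sigma)\wedge[\![s]\!](\sigma,\sigma')\Rightarrow Q(\sigma')$. For predicates, $[\![\varphi]\!]$ is its set of models. $\mathit{wlp}_{\mathcal{L}}(s,Q)$ is the (possibly infinite) disjunction $\bigvee_i P_i$ of all $P_i\in\mathcal{L}$ such that (i) $\{P_i\}s\{Q\}$ holds and (ii) there is no $P\in\mathcal{L}$ with $[\![P_i]\!]\subset[\![P]\!]$ and $\{P\}s\{Q\}$. For a query $\Psi(v)=\exists h.\,\psi(v,h)$ and a language $\mathcal{L}'$: $\varphi\in\mathcal{L}'$ is an $\mathcal{L}'$-consequence if $\forall v.\,\Psi(v)\Rightarrow\varphi(v)$, and a strongest one if no $\mathcal{L}'$-consequence $\varphi'$ has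 $[\![\varphi']\!]\subset[\![\varphi]\!]$. A set $\Pi\subseteq\mathcal{L}'$ forms a best $\mathcal{L}'$-conjunction $\bigwedge\Pi$ iff each element is a strongest $\mathcal{L}'$-consequence, distinct elements are incomparable (neither model set contains the other), and $[\![\bigwedge\Pi]\!]\subseteq[\![\varphi]\!]$ for every strongest $\mathcal{L}'$-consequence $\varphi$. *)

(* Predicates on a state space Sigma are identified with their
   sets of models, i.e. Sigma -> Prop; a language is a set of predicates. *)

Definition pred (Sigma : Type) := Sigma -> Prop.
Definition language (Sigma : Type) := pred Sigma -> Prop.

Definition incl {Sigma : Type} (A B : pred Sigma) : Prop :=
  forall x, A x -> B x.

Definition strict_incl {Sigma : Type} (A B : pred Sigma) : Prop :=
  incl A B /\ exists x, B x /\ ~ A x.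

Definition hoare {Sigma : Type} (P : pred Sigma) (s : Sigma -> Sigma -> Prop)
  (Q : pred Sigma) : Prop :=
  forall sigma sigma', P sigma -> s sigma sigma' -> Q sigma'.

Definition wlp {Sigma : Type} (L : language Sigma) (s : Sigma -> Sigma -> Prop)
  (Q : pred Sigma) : pred Sigma :=
  fun sigma => exists P, L P /\ hoare P s Q /\
    ~ (exists P', L P' /\ strict_incl P P' /\ hoare P' s Q) /\ P sigma.

Definition neg_lang {Sigma : Type} (L : language Sigma) : language Sigma :=
  fun phi => exists psi, L psi /\ phi = (fun sigma => ~ psi sigma).

Definition consequence {Sigma : Type} (L' : language Sigma) (Psi : pred Sigma)
  (phi : pred Sigma) : Prop :=
  L' phi /\ forall v, Psi v -> phi v.

Definition strongest_consequence {Sigma : Type} (L' : language Sigma)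
  (Psi : pred Sigma) (phi : pred Sigma) : Prop :=
  consequence L' Psi phi /\
  ~ (exists phi', consequence L' Psi phi' /\ strict_incl phi' phi).

Definition big_conj {Sigma : Type} (Pi : pred Sigma -> Prop) : pred Sigma :=
  fun v => forall phi, Pi phi -> phi v.

Definition best_conjunction {Sigma : Type} (L' : language Sigma)
  (Psi : pred Sigma) (Pi : pred Sigma -> Prop) : Prop :=
  (forall phi, Pi phi -> strongest_consequence L' Psi phi) /\
  (forall phi1 phi2, Pi phi1 -> Pi phi2 -> phi1 <> phi2 ->
      ~ incl phi1 phi2 /\ ~ incl phi2 phi1) /\
  (forall phi, strongest_consequence L' Psi phi -> incl (big_conj Pi) phi).

(* A precondition P is valid for s and Q exactly when ~P is a consequence of the query
   "s can reach a state violating Q", and complementation reverses strict inclusion.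
   Hence the strongest consequences in the negated language are precisely the
   complements of the maximal valid preconditions of L.  The disjunction of the latter
   is wlp, while every strongest consequence is implied by, and (being one of its
   members) implies, a best conjunction; so wlp is its negation. *)

From Stdlib Require Import Classical.

Definition compl {Sigma : Type} (P : pred Sigma) : pred Sigma := fun x => ~ P x.

Lemma strict_incl_compl {Sigma : Type} (A B : pred Sigma) :
  strict_incl (compl A) (compl B) <-> strict_incl B A.
Proof.
  unfold strict_incl, incl, compl; split.
  - intros [HAB [x [HBx HAx]]]; split.
    + intros y By; apply NNPP; intros Ay; exact (HAB y Ay By).
    + exists x; split; [exact (NNPP _ HAx) | exact HBx].
  - intros [HBA [x [HAx HBx]]]; split.
    + intros y nAy By; exact (nAy (HBA y By)).
    + exists x; split; [exact HBx | intros nAx; exact (nAx HAx)].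
Qed.

Section Preconditions.

Context {Sigma : Type} (s : Sigma -> Sigma -> Prop) (Q : pred Sigma).

Definition can_violate : pred Sigma :=
  fun sigma => exists sigma', ~ Q sigma' /\ s sigma sigma'.

Lemma hoare_iff_compl_consequence (P : pred Sigma) :
  hoare P s Q <-> incl can_violate (compl P).
Proof.
  split.
  - intros HP v [v' [nQ Hs]] Pv; exact (nQ (HP v v' Pv Hs)).
  - intros HP v v' Pv Hs; apply NNPP; intros nQ.
    exact (HP v (ex_intro _ v' (conj nQ Hs)) Pv).
Qed.

Context (L : language Sigma).

Definition maximal_precondition (P : pred Sigma) : Prop :=
  L P /\ hoare P s Q /\
  ~ (exists P', L P' /\ strict_incl P P' /\ hoare P' s Q).

Lemma wlpE (sigma : Sigma) :
  wlp L s Q sigma <-> exists P, maximal_precondition P /\ P sigma.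
Proof.
  unfold wlp, maximal_precondition; split.
  - intros [P (LP & HP & Hmax & Ps)]; exists P; tauto.
  - intros [P ((LP & HP & Hmax) & Ps)]; exists P; tauto.
Qed.

Lemma consequence_compl (P : pred Sigma) :
  L P -> hoare P s Q -> consequence (neg_lang L) can_violate (compl P).
Proof.
  intros LP HP; split.
  - exists P; split; [exact LP | reflexivity].
  - exact (proj1 (hoare_iff_compl_consequence P) HP).
Qed.

Lemma strongest_consequence_neg_lang (phi : pred Sigma) :
  strongest_consequence (neg_lang L) can_violate phi <->
  exists P, maximal_precondition P /\ phi = compl P.
Proof.
  split.
  - intros [[[P [LP ->]] Hcons] Hmin].
    assert (HP : hoare P s Q) by (apply hoare_iff_compl_consequence; exact Hcons).
    exists P; split; [|reflexivity].
    split; [exact LP | split; [exact HP |]].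
    intros (P' & LP' & HPP' & HP'); apply Hmin.
    exists (compl P'); split; [exact (consequence_compl P' LP' HP') |].
    exact (proj2 (strict_incl_compl P' P) HPP').
  - intros [P [(LP & HP & Hmax) ->]]; split; [exact (consequence_compl P LP HP) |].
    intros [phi' [[[P' [LP' ->]] Hcons'] Hstrict]]; apply Hmax.
    exists P'; split; [exact LP' | split].
    + exact (proj1 (strict_incl_compl P' P) Hstrict).
    + exact (proj2 (hoare_iff_compl_consequence P') Hcons').
Qed.

End Preconditions.

Theorem mainTheorem4 (Sigma : Type) (s : Sigma -> Sigma -> Prop)
  (Q : pred Sigma) (L : language Sigma) (Pi : pred Sigma -> Prop) :
  best_conjunction (neg_lang L)
    (fun sigma => exists sigma', ~ Q sigma' /\ s sigma sigma') Pi ->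
  forall sigma, wlp L s Q sigma <-> ~ big_conj Pi sigma.
Proof.
  intros [Hstrongest [_ Hbelow]] sigma; rewrite wlpE; split.
  - intros [P [Hmax Psigma]] Hconj.
    assert (Hphi : strongest_consequence (neg_lang L) (can_violate s Q) (compl P)).
    { apply strongest_consequence_neg_lang; exists P; split; [exact Hmax | reflexivity]. }
    exact (Hbelow _ Hphi sigma Hconj Psigma).
  - intros Hnconj; apply not_all_ex_not in Hnconj as [phi Hphi].
    apply imply_to_and in Hphi as [Piphi nphi].
    destruct (proj1 (strongest_consequence_neg_lang _ _ _ phi) (Hstrongest phi Piphi))
      as [P [Hmax ->]].
    exists P; split; [exact Hmax | exact (NNPP _ nphi)].
Qed.
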